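(* Let $n\ge 2$ and let $G$ be a graph on $2n+1$ vertices with at least $n^2+n$ edges that contains no two distinct vertices of the same degree joined by a path of length three. Let $\beta$ be the largest integer such that $G$ contains two distinct vertices of degree $\beta$. Then $\beta\le n+1$. Moreover, if $\beta=n+1$, then $G$ is isomorphic to $K_{n,n+1}$.
   Context: A path of length three joining vertices $a$ and $b$ is a path $a\,x\,y\,b$ with four distinct vertices and three edges. Graphs are finite and simple. *)

From mathcomp Require Import all_boot.
Set Implicit Arguments. Unset Strict Implicit. Unset Printing Implicit Defensive.

Definition simple_graph (T : finType) (e : rel T) : Prop :=
  symmetric e /\ irreflexive e.

Definition edges (T : finType) (e : rel T) : {set {set T}} :=
  [set [set p.1; p.2] | p in [set p : T * T | e p.1 p.2]].

Definition deg (T : finType) (e : rel T) (x : T) : nat := #|[set y | e x y]|.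

Definition path3 (T : finType) (e : rel T) (a b : T) : Prop :=
  exists x y : T,
    [/\ uniq [:: a; x; y; b], e a x, e x y & e y b].

Definition Kbip_adj (m k : nat) : rel ('I_m + 'I_k) :=
  fun u v => match u, v with
             | inl _, inr _ => true
             | inr _, inl _ => true
             | _, _ => false
             end.

Definition graph_iso (T U : finType) (e : rel T) (e' : rel U) : Prop :=
  exists f : T -> U, bijective f /\ forall x y, e' (f x) (f y) = e x y.

From mathcomp Require Import all_boot zify.
Set Implicit Arguments. Unset Strict Implicit. Unset Printing Implicit Defensive.

(* Let u <> v have the same degree b >= n + 1, and split the remaining
   vertices into the common neighbours C, the private neighbours U of u and W
   of v, and the set R of vertices adjacent to neither.  A forbidden path
   u x y v or v x y u rules out every edge from C to C, U or W and every edge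
   between U and W, so a vertex of C has degree 2 + (its degree into R).
   Summing degrees bounds 2|E| by a quadratic in |C|, |U| = |W| and |R|, plus
   twice the number of edges inside R, minus twice the number of non-edges
   between C and R.  Edges inside R are paid for by such non-edges: two
   vertices of C with the same number of neighbours in R have equal degree,
   so no edge joins their neighbourhoods in R.  Against |E| >= n^2 + n this
   leaves only b = n + 1, U = W = empty, R independent and completely joined
   to C, i.e. K_{n,n+1} with parts {u, v} + R and C.  If u and v are
   adjacent, the paths x v u x' make the degrees on C pairwise distinct,
   which the same count excludes. *)

Lemma sum_seq_partition (I : finType) (As : seq {set I}) (F : I -> nat) :
  (forall y, \sum_(A <- As) (y \in A) = 1) ->
  \sum_y F y = \sum_(A <- As) \sum_(y in A) F y.
Proof.
move=> cover; under [RHS]eq_bigr => A _ do rewrite big_mkcond /=.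
rewrite exchange_big /=; apply: eq_bigr => y _.
transitivity (\sum_(A <- As) (y \in A) * F y).
  by rewrite -big_distrl /= cover mul1n.
by apply: eq_bigr => A _; case: (y \in A); rewrite ?mul1n ?mul0n.
Qed.

Lemma sum_eq_in (T : finType) (X : {set T}) (x : T) :
  \sum_(y in X) (x == y) = (x \in X).
Proof.
rewrite big_mkcond (bigD1 x) //= eqxx big1 ?addn0 => [|y /negbTE yx].
  by case: (x \in X).
by rewrite eq_sym yx; case: (y \in X).
Qed.

Lemma sum_neq_in (T : finType) (X : {set T}) (x : T) :
  \sum_(y in X) (x != y) = #|X| - (x \in X).
Proof.
have split : \sum_(y in X) (x != y) + \sum_(y in X) (x == y) = #|X|.
  by rewrite -big_split -sum1_card; apply: eq_bigr => y _; case: (x == y).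
by rewrite -split sum_eq_in addnK.
Qed.

Lemma card_inj_bounded (I : finType) (A : {pred I}) (f : I -> nat) m :
  {in A &, injective f} -> {in A, forall x, f x < m} -> #|A| <= m.
Proof.
move=> inj_f lt_f; rewrite cardE -(size_map f) -[m](size_iota 0).
apply: uniq_leq_size => [|_ /mapP[x xA ->]].
  by rewrite map_inj_in_uniq ?enum_uniq // => x y; rewrite !mem_enum; apply: inj_f.
by rewrite mem_iota add0n lt_f // -mem_enum.
Qed.

Lemma double_sum_iota m : 2 * \sum_(0 <= i < m.+1) i = m * m.+1.
Proof.
elim: m => [|m IH]; first by rewrite big_nat1.
by rewrite big_nat_recr //= mulnDr IH; lia.
Qed.

Lemma sum_inj_bounded (I : finType) (A : {pred I}) (f : I -> nat) m :
  {in A &, injective f} -> {in A, forall x, f x <= m} ->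
  2 * \sum_(x in A) f x <= m * m.+1.
Proof.
move=> inj_f le_f; rewrite -double_sum_iota leq_mul2l /=.
have uniq_im : uniq [seq f x | x <- enum A].
  by rewrite map_inj_in_uniq ?enum_uniq // => x y; rewrite !mem_enum; apply: inj_f.
have -> : \sum_(x in A) f x = \sum_(j <- [seq f x | x <- enum A]) j.
  by rewrite big_map big_enum.
apply: (sub_le_big_seq leqnn (fun x y => leq_addr y x)) => j.
rewrite (count_uniq_mem _ uniq_im) count_uniq_mem ?iota_uniq //.
by case: mapP => // -[x xA ->]; rewrite mem_index_iota ltnS le_f // -mem_enum.
Qed.

Lemma graph_iso_Kbip (T : finType) (e : rel T) (X : {set T}) (m k : nat) :
  (forall y z, e y z = ((y \in X) != (z \in X))) -> #|~: X| = m -> #|X| = k ->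
  graph_iso e (@Kbip_adj m k).
Proof.
move=> eX card_Xc card_X.
pose g (a : 'I_m + 'I_k) : T :=
  match a with
  | inl i => enum_val (A := mem (~: X)) (cast_ord (esym card_Xc) i)
  | inr j => enum_val (A := mem X) (cast_ord (esym card_X) j)
  end.
have gX a : (g a \in X) = (if a is inr _ then true else false).
  case: a => [i | j] /=; last exact: enum_valP.
  by apply/negbTE; rewrite -in_setC; apply: enum_valP.
have g_inj : injective g.
  have cross i j : g (inl i) != g (inr j).
    by apply: contraTneq (gX (inr j)) => <-; rewrite gX.
  move=> [i | j] [i' | j'] eq_g.
  - by move/enum_val_inj/(congr1 val): eq_g => /= eq_ii'; congr inl; apply: val_inj.
  - by move: (cross i j'); rewrite eq_g eqxx.
  - by move: (cross i' j); rewrite eq_g eqxx.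
  - by move/enum_val_inj/(congr1 val): eq_g => /= eq_jj'; congr inr; apply: val_inj.
have [f gK fK] : bijective g.
  by apply: (inj_card_bij g_inj); rewrite card_sum !card_ord -card_Xc -card_X addnC cardsC.
exists f; split; first by exists g.
move=> x y; rewrite -[in RHS](fK x) -[in RHS](fK y) eX !gX.
by case: (f x) => ?; case: (f y).
Qed.

Section SimpleGraph.
Variables (T : finType) (e : rel T).

Definition deg_in (X : {set T}) (x : T) : nat := \sum_(y in X) e x y.

Lemma deg_sum (x : T) : deg e x = \sum_y e x y.
Proof. by rewrite /deg -sum1_card big_mkcond; apply: eq_bigr => y _; rewrite inE. Qed.

Lemma deg_in_le_card (X : {set T}) (x : T) : deg_in X x <= #|X|.
Proof. by rewrite -sum1_card; apply: leq_sum => y _; apply: leq_b1. Qed.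

Lemma deg_in_lt_card_nonadj (X : {set T}) (x y : T) :
  y \in X -> ~~ e x y -> deg_in X x < #|X|.
Proof.
move=> yX not_exy.
rewrite /deg_in (cardsD1 y X) yX (bigD1 y yX) /= (negbTE not_exy) add0n -sum1_card.
rewrite (eq_bigl (mem (X :\ y))) => [|z]; last by rewrite /= !inE andbC.
by apply: leq_sum => z _; apply: leq_b1.
Qed.

Lemma deg_in_eq_card (X : {set T}) (x : T) :
  deg_in X x = #|X| -> {in X, forall y, e x y}.
Proof.
move=> full y yX; apply: contraT => /(deg_in_lt_card_nonadj yX).
by rewrite full ltnn.
Qed.

Hypotheses (sym_e : symmetric e) (irr_e : irreflexive e).

Lemma adj_neq (x y : T) : e x y -> x != y.
Proof. by apply: contraTneq => ->; rewrite irr_e. Qed.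

Lemma deg_in_lt_card (X : {set T}) (x : T) : x \in X -> deg_in X x < #|X|.
Proof. by move/deg_in_lt_card_nonadj; apply; rewrite irr_e. Qed.

Lemma sum_deg_in_sym (X Y : {set T}) :
  \sum_(x in X) deg_in Y x = \sum_(y in Y) deg_in X y.
Proof.
by rewrite /deg_in exchange_big; apply: eq_bigr => y _; apply: eq_bigr => x _; rewrite sym_e.
Qed.

Lemma handshake_le : 2 * #|edges e| <= \sum_x deg e x.
Proof.
pose A := [set p : T * T | e p.1 p.2].
have -> : \sum_x deg e x = \sum_(p in A) 1.
  rewrite (eq_bigr _ (fun x _ => deg_sum x)).
  by rewrite pair_big [RHS]big_mkcond; apply: eq_bigr => -[x y] _; rewrite inE.
rewrite (partition_big_imset (fun p : T * T => [set p.1; p.2])) /= mulnC -sum_nat_const.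
apply: leq_sum => s /imsetP[p]; rewrite inE => ep ->; rewrite sum1dep_card.
have swap_in : [set p; (p.2, p.1)] \subset
               [set q in A | [set q.1; q.2] == [set p.1; p.2]].
  apply/subsetP => q; rewrite !inE => /orP[] /eqP -> /=; rewrite ?eqxx ?andbT //.
  by rewrite sym_e ep setUC eqxx.
apply: leq_trans (subset_leq_card swap_in); rewrite cards2.
by case: p ep {swap_in} => x y /= /adj_neq xy; rewrite xpair_eqE negb_and xy.
Qed.

Lemma path3_of_edges a x y b :
  a != b -> a != y -> x != b -> e a x -> e x y -> e y b -> path3 e a b.
Proof.
move=> ab ay xb eax exy eyb; exists x, y; split => //=.
by rewrite !inE !negb_or ab ay xb (adj_neq eax) (adj_neq exy) (adj_neq eyb).
Qed.

Section EdgesInside.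
Variables (C R : {set T}).
Hypothesis twin_nbhds_nonadj : forall x x' t t', x \in C -> x' \in C -> x != x' ->
  deg_in R x = deg_in R x' -> t \in R -> t' \in R -> e x t -> e x' t' -> ~~ e t t'.

Lemma edges_in_twin_bound x x' :
  x \in C -> x' \in C -> x != x' -> deg_in R x = deg_in R x' ->
  \sum_(t in R) deg_in R t + deg_in R x * (deg_in R x - 1) <= #|R| * (#|R| - 1).
Proof.
move=> xC x'C xx' twins; set k := deg_in R x.
pose Q := \sum_(t in R) \sum_(t' in R) (e x t && e x' t' && (t != t')).
have le_Q : \sum_(t in R) deg_in R t + Q <= #|R| * (#|R| - 1).
  rewrite -big_split -sum_nat_const; apply: leq_sum => t tR.
  rewrite -big_split; have := sum_neq_in R t; rewrite tR => <-.
  apply: leq_sum => t' t'R /=.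
  case ett': (e t t') => /=.
    rewrite (adj_neq ett'); have := twin_nbhds_nonadj xC x'C xx' twins tR t'R.
    by case: (e x t); case: (e x' t') => // /(_ isT isT); rewrite ett'.
  by case: (t != t'); rewrite ?andbT ?andbF ?leq_b1.
suff : k * (k - 1) <= Q by lia.
have k_le t : t \in R -> k - 1 <= \sum_(t' in R) (e x' t' && (t != t')).
  move=> tR; have : deg_in R x' <=
    \sum_(t' in R) (e x' t' && (t != t')) + \sum_(t' in R) (t == t').
    by rewrite -big_split; apply: leq_sum => t' _; case: (e x' t'); case: (t == t').
  by rewrite sum_eq_in tR -twins -/k; lia.
rewrite /Q /k /deg_in big_distrl /=; apply: leq_sum => t tR.
by case: (e x t); rewrite ?mul0n // mul1n; apply: k_le.
Qed.

Hypothesis card_R_lt_C : #|R| < #|C|.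

Lemma edges_in_lt_deficiency :
  0 < \sum_(t in R) deg_in R t ->
  \sum_(t in R) deg_in R t + 2 <= 2 * \sum_(x in C) (#|R| - deg_in R x).
Proof.
set r := #|R|; set s := deg_in R; set ER := \sum_(t in R) s t => ER_gt0.
(* k is the largest degree into R shared by two distinct vertices of C: two
   such twins force k (k - 1) non-edges inside R, and the degrees above k
   are pairwise distinct, which forces many non-edges between C and R. *)
pose twin_deg j := (j == 0) ||
  [exists x in C, exists x' in C, [&& x != x', s x == j & s x' == j]].
have twin_deg_le j : twin_deg j -> j <= r.
  case/orP => [/eqP -> // | /exists_inP[x _ /exists_inP[x' _ /and3P[_ /eqP <- _]]]].
  exact: deg_in_le_card.
case: (ex_maxnP (ex_intro twin_deg 0 isT) twin_deg_le) => k twin_k max_k.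
have bound_ER : ER + k * (k - 1) <= r * (r - 1).
  case/orP: twin_k => [/eqP -> | /exists_inP[x xC /exists_inP[x' x'C]]].
    rewrite muln0 addn0 -sum_nat_const; apply: leq_sum => t tR.
    by have := deg_in_lt_card tR; rewrite -/s; lia.
  case/and3P => xx' /eqP sx /eqP sx'; rewrite -sx.
  by apply: (edges_in_twin_bound xC x'C xx'); rewrite -/(s x) -/(s x') sx sx'.
pose J := \sum_(x in [set x in C | k < s x]) (s x - k).
have bound_J : 2 * J <= (r - k) * (r - k).+1.
  apply: sum_inj_bounded => [x y | x _]; last by rewrite leq_sub2r // deg_in_le_card.
  rewrite !inE => /andP[xC kx] /andP[yC ky] /eqP.
  rewrite eqn_sub2rE ?(ltnW kx) ?(ltnW ky) // => /eqP sxy.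
  apply: contraTeq kx => xy; rewrite -leqNgt; apply: max_k; apply/orP; right.
  by apply/exists_inP; exists x => //; apply/exists_inP; exists y; rewrite ?xy ?sxy ?eqxx.
have split_C : #|C| * (r - k) <= \sum_(x in C) (r - s x) + J.
  rewrite /J -sum_nat_const big_mkcond [X in _ + X]big_mkcond [X in X + _]big_mkcond.
  rewrite -big_split; apply: leq_sum => x _; rewrite !inE; case: (x \in C) => //=.
  by have := deg_in_le_card R x; rewrite /r /s; case: ltnP; lia.
have k_lt_r : k < r.
  rewrite ltn_neqAle (twin_deg_le _ twin_k) andbT; apply: contraTneq ER_gt0 => k_eq_r.
  by move: bound_ER; rewrite k_eq_r; lia.
move: bound_ER bound_J split_C card_R_lt_C; rewrite -/r.
set Dl := \sum_(x in C) (r - s x); clearbody r J Dl ER.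
have [d ->] : exists d, r = k + d.+1 by exists (r - k).-1; lia.
by rewrite addKn addnS subSS subn0; nia.
Qed.

End EdgesInside.

Definition common_nbhd (u v : T) : {set T} := [set y | e u y && e v y].
Definition private_nbhd (u v : T) : {set T} := [set y | e u y && ~~ e v y && (y != v)].
Definition non_nbhd (u v : T) : {set T} :=
  [set y | ~~ e u y && ~~ e v y && (y != u) && (y != v)].

Lemma common_nbhdC u v : common_nbhd u v = common_nbhd v u.
Proof. by apply/setP => y; rewrite !inE andbC. Qed.

Lemma non_nbhdC u v : non_nbhd u v = non_nbhd v u.
Proof.
apply/setP => y; rewrite !inE andbAC -!andbA andbCA.
by congr [&& _, _ & _]; rewrite andbC.
Qed.

Lemma sum_split_pair u v (F : T -> nat) : u != v ->
  \sum_y F y = F u + F v + \sum_(y in common_nbhd u v) F y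
               + \sum_(y in private_nbhd u v) F y + \sum_(y in private_nbhd v u) F y
               + \sum_(y in non_nbhd u v) F y.
Proof.
move=> uv.
rewrite (@sum_seq_partition _ [:: [set u]; [set v]; common_nbhd u v;
                                  private_nbhd u v; private_nbhd v u; non_nbhd u v]).
  by rewrite !big_cons big_nil !big_set1 !addnA addn0.
move=> y; rewrite !big_cons big_nil !inE.
have [-> | yu] := eqVneq y u; first by rewrite (negbTE uv) irr_e ?eqxx /= ?andbF.
have [-> | yv] := eqVneq y v; first by rewrite irr_e ?eqxx /= ?andbF.
by case: (e u y); case: (e v y).
Qed.

Lemma card_pair u v : u != v ->
  #|T| = #|common_nbhd u v| + #|private_nbhd u v| + #|private_nbhd v u|
         + #|non_nbhd u v| + 2.
Proof. by move=> uv; have := sum_split_pair (fun=> 1) uv; rewrite !sum1_card => ->; lia. Qed.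

Lemma deg_pair u v : u != v ->
  deg e u = #|common_nbhd u v| + #|private_nbhd u v| + e u v.
Proof.
move=> uv; rewrite deg_sum (sum_split_pair _ uv) irr_e -!sum1_card.
rewrite [\sum_(y in private_nbhd v u) _]big1 => [|y]; last first.
  by rewrite !inE => /andP[/andP[_ /negbTE ->]].
rewrite [\sum_(y in non_nbhd u v) _]big1 => [|y]; last first.
  by rewrite !inE => /andP[/andP[/andP[/negbTE ->]]].
rewrite (eq_bigr (fun=> 1)) => [|y]; last by rewrite inE => /andP[->].
rewrite [\sum_(y in private_nbhd u v) _](eq_bigr (fun=> 1)) => [|y]; last first.
  by rewrite inE => /andP[/andP[->]].
lia.
Qed.

Lemma deg_non u v x : u != v -> x \in non_nbhd u v ->
  deg e x = deg_in (common_nbhd u v) x + deg_in (private_nbhd u v) x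
            + deg_in (private_nbhd v u) x + deg_in (non_nbhd u v) x.
Proof.
move=> uv; rewrite inE => /andP[/andP[/andP[nux nvx] _] _].
by rewrite deg_sum (sum_split_pair _ uv) (sym_e x u) (sym_e x v) (negbTE nux) (negbTE nvx).
Qed.

Section EqualDegreePath3Free.
Hypothesis no_path3 : forall a b, a != b -> deg e a = deg e b -> ~ path3 e a b.

Lemma nbrs_nonadj u v x y : u != v -> deg e u = deg e v ->
  e u x -> x != v -> e v y -> y != u -> ~~ e x y.
Proof.
move=> uv duv eux xv evy yu; apply/negP => exy; apply: (no_path3 uv duv).
by apply: path3_of_edges uv _ xv eux exy _; rewrite 1?eq_sym // sym_e.
Qed.

Lemma deg_common u v x : u != v -> deg e u = deg e v -> x \in common_nbhd u v ->
  deg e x = (deg_in (non_nbhd u v) x).+2.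
Proof.
move=> uv duv; rewrite inE => /andP[eux evx].
have nonadj_u y : e u y -> y != v -> e x y = false.
  move=> euy yv; apply/negbTE; rewrite eq_sym in uv.
  by apply: nbrs_nonadj uv (esym duv) evx _ euy yv; rewrite eq_sym adj_neq.
have nonadj_v y : e v y -> y != u -> e x y = false.
  by move=> evy yu; apply/negbTE; apply: nbrs_nonadj uv duv eux _ evy yu; rewrite eq_sym adj_neq.
rewrite deg_sum (sum_split_pair _ uv) (sym_e x u) eux (sym_e x v) evx.
rewrite [\sum_(y in common_nbhd u v) _]big1 => [|y]; last first.
  by rewrite inE => /andP[euy evy]; rewrite nonadj_u // eq_sym adj_neq.
rewrite [\sum_(y in private_nbhd u v) _]big1 => [|y]; last first.
  by rewrite inE => /andP[/andP[euy _] yv]; rewrite nonadj_u.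
rewrite [\sum_(y in private_nbhd v u) _]big1 => [|y]; last first.
  by rewrite inE => /andP[/andP[evy _] yu]; rewrite nonadj_v.
by rewrite /deg_in; lia.
Qed.

Lemma deg_private u v x : u != v -> deg e u = deg e v -> x \in private_nbhd u v ->
  deg e x = (deg_in (private_nbhd u v) x + deg_in (non_nbhd u v) x).+1.
Proof.
move=> uv duv; rewrite inE => /andP[/andP[eux nevx] xv].
have nonadj_v y : e v y -> y != u -> e x y = false.
  by move=> evy yu; apply/negbTE; apply: nbrs_nonadj uv duv eux xv evy yu.
rewrite deg_sum (sum_split_pair _ uv) (sym_e x u) eux (sym_e x v) (negbTE nevx).
rewrite [\sum_(y in common_nbhd u v) _]big1 => [|y]; last first.
  by rewrite inE => /andP[euy evy]; rewrite nonadj_v // eq_sym adj_neq.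
rewrite [\sum_(y in private_nbhd v u) _]big1 => [|y]; last first.
  by rewrite inE => /andP[/andP[evy _] yu]; rewrite nonadj_v.
by rewrite /deg_in; lia.
Qed.

Lemma common_nonadj u v x x' : u != v -> deg e u = deg e v ->
  x \in common_nbhd u v -> x' \in common_nbhd u v -> ~~ e x x'.
Proof.
move=> uv duv; rewrite !inE => /andP[eux evx] /andP[eux' evx'].
by apply: nbrs_nonadj uv duv eux _ evx' _; rewrite eq_sym adj_neq.
Qed.

Lemma common_twins_nonadj u v : u != v -> deg e u = deg e v ->
  forall x x' t t', x \in common_nbhd u v -> x' \in common_nbhd u v -> x != x' ->
  deg_in (non_nbhd u v) x = deg_in (non_nbhd u v) x' ->
  t \in non_nbhd u v -> t' \in non_nbhd u v -> e x t -> e x' t' -> ~~ e t t'.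
Proof.
move=> uv duv x x' t t' xC x'C xx' twins tR t'R ext ex't; apply/negP => ett'.
have common_non_neq y z : y \in common_nbhd u v -> z \in non_nbhd u v -> y != z.
  by rewrite !inE => /andP[euy _]; apply: contraTneq => <-; rewrite euy.
apply: (no_path3 xx'); first by rewrite !(deg_common uv duv) // twins.
apply: path3_of_edges xx' (common_non_neq _ _ xC t'R) _ ext ett' _; last by rewrite sym_e.
by rewrite eq_sym common_non_neq.
Qed.

Lemma common_deg_inj u v : e u v -> {in common_nbhd u v &, injective (deg e)}.
Proof.
move=> euv x x'; rewrite !inE => /andP[eux evx] /andP[eux' evx'] dxx'.
apply/eqP; apply: contraT => xx'; case: (no_path3 xx' dxx').
(* the path x v u x' *)
by apply: path3_of_edges xx' _ (adj_neq evx') _ _ eux'; rewrite 1?eq_sym ?adj_neq // sym_e.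
Qed.

Lemma common_deg_neq u v x x' : u != v ->
  x \in common_nbhd u v -> x' \in common_nbhd u v -> x != x' -> deg e x != deg e u.
Proof.
move=> uv; rewrite !inE => /andP[eux evx] /andP[eux' evx'] xx'.
have xu : x != u by rewrite eq_sym adj_neq.
(* the path x v x' u *)
apply/eqP => dxu; case: (no_path3 xu dxu).
by apply: path3_of_edges xu xx' _ _ evx' _; rewrite 1?eq_sym // sym_e.
Qed.

(* c, a and r stand for the sizes of C, U (or W) and R, ER for the sum of the
   degrees into R over R, and Dl for the number of non-edges between C and R. *)
Lemma count_nonadjacent n c a r ER Dl :
  c + 2 * a + r + 2 = 2 * n + 1 -> n + 1 <= c + a ->
  2 * (n ^ 2 + n) + 2 * Dl <=
    2 * (c + a) + c * (2 + 2 * r) + 2 * (a * (a + 2 * r)) + ER ->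
  (0 < ER -> ER + 2 <= 2 * Dl) ->
  [/\ a = 0, ER = 0, Dl = 0 & c + a = n + 1].
Proof.
move=> card_T deg_ge count ER_lt.
have [t deg_eq] : exists t, c + a = n + 1 + t by exists (c + a - (n + 1)); lia.
have -> : n = r + t + a + 2 by lia.
have -> : c = r + 2 * t + 3 by lia.
by move: count; rewrite -mulnn; case: (posnP ER) => [-> | /ER_lt]; split; nia.
Qed.

Lemma count_adjacent n c a r ER Dl :
  c + 2 * a + r + 2 = 2 * n + 1 -> n + 1 <= c + a + 1 -> 0 < a ->
  2 * (n ^ 2 + n) + 2 * Dl <=
    2 * (c + a + 1) + c * (2 + 2 * r) + 2 * (a * (a + 2 * r)) + ER ->
  (0 < ER -> ER + 2 <= 2 * Dl) -> False.
Proof.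
move=> card_T deg_ge a_gt0 count ER_lt.
have [t deg_eq] : exists t, c + a + 1 = n + 1 + t by exists (c + a - n); lia.
move: count; have -> : n = r + t + a + 1 by lia.
have -> : c = r + 2 * t + 1 by lia.
by rewrite -mulnn; case: (posnP ER) => [-> | /ER_lt]; nia.
Qed.

Section HighDegreePair.
Variables (u v : T).
Hypotheses (uv : u != v) (duv : deg e u = deg e v).

Local Notation C := (common_nbhd u v).
Local Notation U := (private_nbhd u v).
Local Notation W := (private_nbhd v u).
Local Notation R := (non_nbhd u v).

Lemma sum_deg_le :
  \sum_x deg e x + 2 * \sum_(x in C) (#|R| - deg_in R x) <=
  2 * deg e u + #|C| * (2 + 2 * #|R|) + #|U| * (#|U| + 2 * #|R|)
  + #|W| * (#|W| + 2 * #|R|) + \sum_(t in R) deg_in R t.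
Proof.
have vu : v != u by rewrite eq_sym.
have sumC : \sum_(x in C) deg e x + \sum_(x in C) deg_in R x
            + 2 * \sum_(x in C) (#|R| - deg_in R x) = #|C| * (2 + 2 * #|R|).
  rewrite -sum_nat_const big_distrr -!big_split; apply: eq_bigr => x xC /=.
  by rewrite (deg_common uv duv xC); have := deg_in_le_card R x; lia.
have sumU : \sum_(x in U) deg e x + \sum_(x in U) deg_in R x <= #|U| * (#|U| + 2 * #|R|).
  rewrite -sum_nat_const -big_split; apply: leq_sum => x xU /=.
  rewrite (deg_private uv duv xU).
  by have := deg_in_le_card R x; have := deg_in_lt_card xU; lia.
have sumW : \sum_(x in W) deg e x + \sum_(x in W) deg_in R x <= #|W| * (#|W| + 2 * #|R|).
  rewrite -sum_nat_const -big_split; apply: leq_sum => x xW /=.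
  rewrite (deg_private vu (esym duv) xW) non_nbhdC.
  by have := deg_in_le_card R x; have := deg_in_lt_card xW; lia.
have sumR : \sum_(x in R) deg e x = \sum_(x in C) deg_in R x + \sum_(x in U) deg_in R x
                                    + \sum_(x in W) deg_in R x + \sum_(t in R) deg_in R t.
  rewrite (eq_bigr _ (fun x xR => deg_non uv xR)) !big_split /=.
  by rewrite (sum_deg_in_sym R C) (sum_deg_in_sym R U) (sum_deg_in_sym R W).
by rewrite (sum_split_pair _ uv) -duv sumR; lia.
Qed.

Lemma common_deg_in_inj : e u v -> {in C &, injective (deg_in R)}.
Proof.
move=> euv x x' xC x'C sxx'.
by apply: (common_deg_inj euv) => //; rewrite !(deg_common uv duv) // sxx'.
Qed.

Lemma card_common_adj : e u v -> #|C| <= #|R|.+1.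
Proof.
move=> euv; apply: card_inj_bounded (common_deg_in_inj euv) _.
by move=> x _; rewrite ltnS deg_in_le_card.
Qed.

Lemma card_common_adj_full : e u v -> 1 < #|C| -> deg e u = #|R|.+2 -> #|C| <= #|R|.
Proof.
move=> euv C_gt1 deg_u; apply: card_inj_bounded (common_deg_in_inj euv) _ => x xC.
have [x' x'C x'x] : exists2 x', x' \in C & x' != x.
  have /card_gt0P[x' x'Cx] : 0 < #|C :\ x| by rewrite (cardsD1 x C) xC in C_gt1.
  by exists x'; move: x'Cx; rewrite !inE => /andP[].
have := common_deg_neq uv xC x'C; rewrite eq_sym x'x deg_u (deg_common uv duv xC).
by move=> /(_ isT); rewrite ltn_neqAle deg_in_le_card andbT.
Qed.

Lemma not_common_pair y : U = set0 -> W = set0 -> y \notin C ->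
  [\/ y = u, y = v | y \in R].
Proof.
move=> U0 W0 yC; have yU : y \notin U by rewrite U0 inE.
have yW : y \notin W by rewrite W0 inE.
have [-> | yu] := eqVneq y u; first by constructor 1.
have [-> | yv] := eqVneq y v; first by constructor 2.
by constructor 3; move: yC yU yW; rewrite !inE yu yv; case: (e u y); case: (e v y).
Qed.

Lemma complete_bipartite_pair : ~~ e u v -> U = set0 -> W = set0 ->
  \sum_(t in R) deg_in R t = 0 -> \sum_(x in C) (#|R| - deg_in R x) = 0 ->
  forall y z, e y z = ((y \in C) != (z \in C)).
Proof.
move=> neuv U0 W0 ER0 Dl0.
have outside := not_common_pair U0 W0.
have C_R x t : x \in C -> t \in R -> e x t.
  move=> xC; apply: deg_in_eq_card; apply/eqP; rewrite eqn_leq deg_in_le_card -subn_eq0.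
  by move/eqP: Dl0; rewrite sum_nat_eq0 => /forall_inP/(_ x xC).
have R_R t t' : t \in R -> t' \in R -> ~~ e t t'.
  move=> tR t'R; move/eqP: ER0; rewrite sum_nat_eq0 => /forall_inP/(_ t tR).
  by rewrite sum_nat_eq0 => /forall_inP/(_ t' t'R); case: (e t t').
have C_out x z : x \in C -> z \notin C -> e x z.
  move=> xC /outside[-> | -> | zR]; last exact: C_R.
    by move: xC; rewrite inE sym_e => /andP[].
  by move: xC; rewrite inE (sym_e x) => /andP[].
have out_out y z : y \notin C -> z \notin C -> ~~ e y z.
  have u_out w : w \notin C -> ~~ e u w.
    by case/outside => [-> | -> | ]; rewrite ?irr_e // inE => /andP[/andP[/andP[]]].
  have v_out w : w \notin C -> ~~ e v w.
    case/outside => [-> | -> | ]; rewrite ?irr_e ?(sym_e v u) //.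
    by rewrite inE => /andP[/andP[/andP[_ ->]]].
  move=> yC zC; case: (outside y yC) => [-> | -> | yR]; [exact: u_out | exact: v_out |].
  case: (outside z zC) => [-> | -> | zR]; last exact: R_R.
    by rewrite sym_e; apply: u_out.
  by rewrite sym_e; apply: v_out.
move=> y z; case yC: (y \in C); case zC: (z \in C) => /=.
- by apply/negbTE/(common_nonadj uv duv).
- by apply: C_out; rewrite ?zC.
- by rewrite sym_e; apply: C_out; rewrite ?yC.
- by apply/negbTE/out_out; rewrite ?yC ?zC.
Qed.

Lemma high_degree_pair n :
  2 <= n -> #|T| = 2 * n + 1 -> n ^ 2 + n <= #|edges e| -> n + 1 <= deg e u ->
  deg e u = n + 1 /\ graph_iso e (@Kbip_adj n (n + 1)).
Proof.
move=> n_ge2 card_T edges_ge deg_ge.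
have card_T' := card_pair uv.
have deg_u := deg_pair uv.
have vu : v != u by rewrite eq_sym.
have deg_v := deg_pair vu.
rewrite -common_nbhdC (sym_e v u) -duv in deg_v.
have eps_le : e u v <= 1 := leq_b1 _.
have count := sum_deg_le; have handshake := handshake_le.
have card_W : #|W| = #|U| by lia.
rewrite card_W in count.
have R_lt_C : #|R| < #|C| by lia.
have ER_lt := edges_in_lt_deficiency (common_twins_nonadj uv duv) R_lt_C.
case: (boolP (e u v)) => [euv | neuv].
  exfalso; case: (posnP #|U|) => [U0 | U_gt0].
    have C_eq : #|C| = n by have := card_common_adj euv; lia.
    by have := card_common_adj_full euv; lia.
  by apply: (@count_adjacent n #|C| #|U| #|R| _ _ _ _ U_gt0 _ ER_lt); lia.
rewrite (negbTE neuv) in deg_u deg_v.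
have [||| U0 ER0 Dl0 deg_eq] :=
  @count_nonadjacent n #|C| #|U| #|R| _ _ _ _ _ ER_lt; try lia.
split; first lia.
apply: (graph_iso_Kbip (complete_bipartite_pair _ _ _ ER0 Dl0)) => //.
- exact: cards0_eq.
- by apply: cards0_eq; lia.
- by have := cardsC C; lia.
- lia.
Qed.

End HighDegreePair.

End EqualDegreePath3Free.

End SimpleGraph.

Theorem lemma2p2 (n : nat) (T : finType) (e : rel T) (beta : nat) :
  2 <= n ->
  simple_graph e ->
  #|T| = 2 * n + 1 ->
  n ^ 2 + n <= #|edges e| ->
  (forall a b : T, a != b -> deg e a = deg e b -> ~ path3 e a b) ->
  (* beta is the largest integer such that two distinct vertices have degree beta *)
  (exists a b : T, [/\ a != b, deg e a = beta & deg e b = beta]) ->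
  (forall a b : T, a != b -> deg e a = deg e b -> deg e a <= beta) ->
  beta <= n + 1 /\
  (beta = n + 1 -> graph_iso e (@Kbip_adj n (n + 1))).
Proof.
move=> n_ge2 [sym_e irr_e] card_T edges_ge no_path3 [a [b [ab <- dab]]] _.
have high := high_degree_pair sym_e irr_e no_path3 ab (esym dab) n_ge2 card_T edges_ge.
split=> [|deg_a]; last by case: high; rewrite deg_a.
by case: leqP => // lt; case: (high (ltnW lt)) => eq _; rewrite eq ltnn in lt.
Qed.
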